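(* Let $n\in\mathbb{N}$ and $0\leq\delta\leq n-1$, and let $q$ be a prime power with $n\leq q-1$. Put $\mathbb{F}:=\mathbb{F}_q$ and choose $\alpha\in\mathbb{F}$ with $\mathrm{ord}(\alpha)\geq n$. Define \[ G:=\sum_{\nu=0}^{\delta}z^\nu\begin{pmatrix}1&\alpha^\nu&\alpha^{2\nu}&\ldots&\alpha^{(n-1)\nu}\end{pmatrix}\in\mathbb{F}[z]^{1\times n} \] and $\mathcal{C}:=\mathrm{im}\,G=\{uG\mid u\in\mathbb{F}[z]\}\subseteq\mathbb{F}[z]^n$. Then $G$ is right invertible (so $\mathcal{C}$ is a convolutional code with parameters $(n,1,\delta)$), and $\mathrm{dist}(\mathcal{C})=n(\delta+1)$. In other words, $\mathcal{C}$ is an MDS convolutional code with parameters $(n,1,\delta)$.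
   Context: $\mathrm{ord}(\alpha)$ denotes the multiplicative order of $\alpha$ in $\mathbb{F}^*$. A matrix $G\in\mathbb{F}[z]^{k\times n}$ is right invertible if $G\tilde G=I_k$ for some $\tilde G\in\mathbb{F}[z]^{n\times k}$. A convolutional code with parameters $(n,k,\delta)$ is a submodule $\mathcal{C}=\mathrm{im}\,G=\{uG\mid u\in\mathbb{F}[z]^k\}\subseteq\mathbb{F}[z]^n$ where $G\in\mathbb{F}[z]^{k\times n}$ is right invertible and $\delta$ is the maximum degree of the $k\times k$ minors of $G$ (the overall constraint length). For $v=\sum_{j=0}^N v_jz^j\in\mathbb{F}[z]^n$ with $v_j\in\mathbb{F}^n$, the weight is $\mathrm{wt}(v)=\sum_j\mathrm{wt}(v_j)$ with Hamming weight $\mathrm{wt}(v_j)$, and $\mathrm{dist}(\mathcal{C})=\min\{\mathrm{wt}(v)\mid v\in\mathcal{C},v\neq0\}$. A code with parameters $(n,k,\delta)$ is MDS if its distance equals $(n-k)(\lfloor\delta/k\rfloor+1)+\delta+1$, which for $k=1$ equals $n(\delta+1)$. *)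

From HB Require Import structures.
From mathcomp Require Import all_boot all_order all_algebra all_fingroup all_field.
Set Implicit Arguments. Unset Strict Implicit. Unset Printing Implicit Defensive.
Import GRing.Theory.
Local Open Scope ring_scope.

Section Conv.
Variable F : fieldType.

Definition Gmat (n delta : nat) (a : F) : 'rV[{poly F}]_n :=
  \sum_(nu < delta.+1) ('X ^+ nu) *: \row_(j < n) ((a ^+ (j * nu)%N)%:P).

Definition right_invertible (k n : nat) (G : 'M[{poly F}]_(k, n)) : Prop :=
  exists Gt : 'M[{poly F}]_(n, k), G *m Gt = 1%:M.

(* overall constraint length for k = 1: maximum degree of the 1x1 minors *)
Definition constraint_length1 (n : nat) (G : 'rV[{poly F}]_n) : nat :=
  (\max_(j < n) (size (G ord0 j)).-1)%N.

Definition code (k n : nat) (G : 'M[{poly F}]_(k, n)) (v : 'rV[{poly F}]_n) : Prop :=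
  exists u : 'rV[{poly F}]_k, v = u *m G.

Definition coefvec (n : nat) (v : 'rV[{poly F}]_n) (j : nat) : 'rV[F]_n :=
  \row_i (v ord0 i)`_j.

Definition hwt (n : nat) (w : 'rV[F]_n) : nat := #|[set i | w ord0 i != 0]|.

Definition wt (n : nat) (v : 'rV[{poly F}]_n) : nat :=
  (\sum_(j < (\max_(i < n) size (v ord0 i))%N) hwt (coefvec v j))%N.

Definition dist_eq (n : nat) (C : 'rV[{poly F}]_n -> Prop) (d : nat) : Prop :=
  (exists v, C v /\ v != 0 /\ wt v = d) /\
  (forall v, C v -> v != 0 -> (d <= wt v)%N).
End Conv.

From HB Require Import structures.
From mathcomp Require Import all_boot all_order all_algebra all_fingroup all_field.
From mathcomp Require Import cyclic.
From mathcomp Require Import zify.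
Set Implicit Arguments. Unset Strict Implicit. Unset Printing Implicit Defensive.
Import GRing.Theory.
Local Open Scope ring_scope.

(* A codeword is p G = (p g_0, ..., p g_(n-1)) with g_i(z) = sum_(k <= delta) (a^i z)^k,
   so its t-th coefficient vector evaluates Q_t(y) = sum_(r <= delta) p_(t-r) y^r at the
   distinct nonzero points a^0, ..., a^(n-1).  If the nonzero coefficients of p lie between
   s0 and m = deg p, then for t in either window [s0, s0 + delta] or [m, m + delta] the
   polynomial Q_t is nonzero and, once a power of y is factored out, has degree at most
   min(t - s0, delta) - (t - m); so v_t has at most that many zero entries.  Summing over the
   two windows gives weight at least n (delta + 1), using delta < n.
   For right invertibility, G = (1, z, ..., z^delta) V with V a Vandermonde matrix on
   distinct points, which has a constant right inverse. *)

Section WindowSums.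
Local Open Scope nat_scope.

Lemma leq_sum_prefix (f : nat -> nat) l L :
  l <= L -> \sum_(j < l) f j <= \sum_(j < L) f j.
Proof. by move=> lL; rewrite -(subnKC lL) big_split_ord leq_addr. Qed.

Lemma window_sum_lb (f : nat -> nat) n delta D : delta < n ->
  (forall j, j <= delta -> n <= f j + minn j D) ->
  (forall j, j <= delta -> n <= f (D + j) + minn D (delta - j)) ->
  n * delta.+1 <= \sum_(j < D + delta.+1) f j.
Proof.
move=> lt_delta_n left_lb right_lb; rewrite big_split_ord /=.
have [le_D_delta | lt_delta_D] := leqP D delta; last first.
  apply: leq_trans (leq_add (leq_sum_prefix f lt_delta_D) (leqnn _)).
  rewrite -big_split /= -[n * _]mulnC -[X in X * n](card_ord delta.+1) -sum_nat_const.
  apply: leq_sum => j _; have le_j := ltn_ord j.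
  by have := left_lb j le_j; have := right_lb j le_j; lia.
(* The windows overlap: pair [j < D] with [delta.+1 + j].  Each pair exceeds [n] by [e],
   which pays for the deficit, at most [D], of each of the [e] unpaired terms. *)
have [e def_e] : exists e, delta.+1 = e + D by exists (delta.+1 - D); rewrite subnK // ltnW.
rewrite def_e big_split_ord /= addnCA.
set S_left := \sum_(j < D) f j; set S_right := \sum_(j < D) f (D + (e + j)).
set S_mid := \sum_(j < e) f (D + j).
have pairs : D * (n + e) <= S_left + S_right.
  rewrite -big_split -[X in X * _](card_ord D) -sum_nat_const; apply: leq_sum => j _ /=.
  have lt_j := ltn_ord j.
  have := left_lb j (ltnW (leq_trans lt_j le_D_delta)).
  by have := right_lb (e + j) ltac:(lia); lia.
have singles : e * n <= S_mid + e * D.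
  rewrite -[X in X * n](card_ord e) -[X in _ + X * D](card_ord e) -!sum_nat_const -big_split /=.
  apply: leq_sum => j _; have lt_j := ltn_ord j.
  by have := right_lb j ltac:(lia); lia.
lia.
Qed.
End WindowSums.

Lemma card_nonzero_roots_lt (T : finType) (R : idomainType) (f : T -> R)
    (q : {poly R}) k :
  injective f -> (forall x, f x != 0) -> q != 0 ->
  (forall r, (r < k)%N -> q`_r = 0) ->
  (#|[set x | root q (f x)]| < size q - k)%N.
Proof.
move=> f_inj f_neq0 q_neq0 q_low.
have q_split : q = drop_poly k q * 'X^k.
  rewrite -{1}(poly_take_drop k q) [take_poly k q](_ : _ = 0) ?add0r //.
  by apply/polyP => r; rewrite coef_take_poly coef0; case: ltnP => // /q_low.
rewrite -size_drop_poly cardE -(size_map f); apply: max_poly_roots.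
- by apply: contraNneq q_neq0 => q_hi0; rewrite q_split q_hi0 mul0r.
- apply/allP => _ /mapP [x + ->]; rewrite mem_enum inE /root {1}q_split hornerM.
  by rewrite hornerXn mulf_eq0 expf_eq0 (negbTE (f_neq0 x)) andbF orbF.
- by rewrite map_inj_uniq ?enum_uniq.
Qed.

Lemma row_free_Vandermonde (F : fieldType) m n (x : 'rV[F]_n) :
  (m <= n)%N -> injective (x 0) -> row_free (Vandermonde m x).
Proof.
move=> le_m_n x_inj; apply: inj_row_free => u uV0.
have u_root j : root (rVpoly u) (x 0 j).
  have := congr1 (fun w : 'rV_n => w 0 j) uV0; rewrite !mxE /root => <-.
  by rewrite horner_poly; apply/eqP/eq_bigr => i _; rewrite valK !mxE.
have u_poly0 : rVpoly u = 0.
  apply: (roots_geq_poly_eq0 (rs := [seq x 0 j | j : 'I_n])).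
  - by apply/allP => _ /mapP [j _ ->].
  - by rewrite map_inj_uniq ?enum_uniq.
  - by rewrite size_map size_enum_ord (leq_trans (size_poly _ _)).
by rewrite -[u]rVpolyK u_poly0 linear0.
Qed.

Lemma bigmax_const_ord (n k : nat) : (0 < n)%N -> (\max_(i < n) k)%N = k.
Proof.
case: n => // n _; elim: n => [|n IHn]; first by rewrite big_ord1.
by rewrite big_ord_recr /= IHn maxnn.
Qed.

Lemma expr_unit_inj (R : finUnitRingType) (a : {unit R}) n :
  (n <= #[a]%g)%N -> injective (fun i : 'I_n => val a ^+ i).
Proof.
move=> le_n_a i j /=; rewrite -!FinRing.val_unitX => /val_inj/eqP.
by rewrite eq_expg_ord // => /eqP.
Qed.

Section GeneratorMatrix.
Variables (F : fieldType) (n delta : nat) (a : F).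
Hypotheses (a_neq0 : a != 0) (expr_inj : injective (fun i : 'I_n => a ^+ i)).
Hypothesis lt_delta_n : (delta < n)%N.
Local Notation G := (Gmat n delta a).

Let n_gt0 : (0 < n)%N. Proof. exact: leq_ltn_trans lt_delta_n. Qed.

Lemma Gmat_entry i : G ord0 i = \poly_(k < delta.+1) (a ^+ i) ^+ k.
Proof.
rewrite /Gmat summxE poly_def; apply: eq_bigr => k _.
by rewrite !mxE -mul_polyC mulrC exprM.
Qed.

Lemma size_Gmat_entry i : size (G ord0 i) = delta.+1.
Proof. by rewrite Gmat_entry size_poly_eq // !expf_neq0. Qed.

Lemma Gmat_neq0 : G != 0.
Proof.
apply/eqP => /matrixP/(_ ord0 (Ordinal n_gt0))/eqP.
by rewrite mxE -size_poly_eq0 size_Gmat_entry.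
Qed.

Lemma constraint_length_Gmat : constraint_length1 G = delta.
Proof.
rewrite /constraint_length1; under eq_bigr do rewrite size_Gmat_entry.
exact: bigmax_const_ord n_gt0.
Qed.

Lemma Gmat_Vandermonde :
  G = \row_(k < delta.+1) 'X^k *m map_mx polyC (Vandermonde delta.+1 (\row_(i < n) a ^+ i)).
Proof.
apply/rowP => i; rewrite Gmat_entry poly_def !mxE.
by apply: eq_bigr => k _; rewrite !mxE mulrC mul_polyC.
Qed.

Lemma Gmat_right_invertible : right_invertible G.
Proof.
have x_inj : injective ((\row_(i < n) a ^+ i) 0) by move=> i j; rewrite !mxE => /expr_inj.
have /row_freeP [R VR] := row_free_Vandermonde lt_delta_n x_inj.
exists (map_mx polyC (R *m delta_mx 0 0)).
rewrite Gmat_Vandermonde -mulmxA -map_mxM mulmxA VR mul1mx map_delta_mx -colE.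
by apply/matrixP => i j; rewrite !ord1 !mxE expr0.
Qed.

Lemma wt_Gmat : wt G = (n * delta.+1)%N.
Proof.
have max_size : (\max_(i < n) size (G ord0 i))%N = delta.+1.
  by rewrite (eq_bigr (fun=> delta.+1)) ?bigmax_const_ord ?n_gt0 // => i _; exact: size_Gmat_entry.
rewrite /wt max_size -[in RHS](card_ord delta.+1) mulnC -sum_nat_const.
apply: eq_bigr => t _; rewrite /hwt -[RHS](card_ord n); apply: eq_card => i.
by rewrite !inE mxE Gmat_entry coef_poly ltn_ord !expf_neq0.
Qed.

Definition slice_poly (p : {poly F}) t : {poly F} :=
  \poly_(r < t.+1) (p`_(t - r) *+ (r <= delta)%N).

Lemma coefvec_scale_Gmat p t i : coefvec (p *: G) t 0 i = (slice_poly p t).[a ^+ i].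
Proof.
rewrite !mxE coefMr horner_poly; apply: eq_bigr => r _.
by rewrite Gmat_entry coef_poly ltnS; case: leqP; rewrite ?mulr0 ?mul0r.
Qed.

Lemma hwt_coefvec_lb p t k : slice_poly p t != 0 ->
    (forall r, (r < k)%N -> (slice_poly p t)`_r = 0) ->
  (n < hwt (coefvec (p *: G) t) + (size (slice_poly p t) - k))%N.
Proof.
move=> Q_neq0 Q_low; set Z := [set i : 'I_n | root (slice_poly p t) (a ^+ i)].
have -> : hwt (coefvec (p *: G) t) = #|~: Z|.
  by apply: eq_card => i; rewrite !inE coefvec_scale_Gmat.
rewrite -[n in (n < _)%N]card_ord -(cardsC Z) addnC ltn_add2l.
exact: card_nonzero_roots_lt expr_inj (fun i => expf_neq0 _ a_neq0) Q_neq0 Q_low.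
Qed.

Section Codeword.
Variables (p : {poly F}) (s0 m : nat).
Hypotheses (p_s0 : p`_s0 != 0) (p_below_s0 : forall r, (r < s0)%N -> p`_r = 0).
Hypothesis size_p : size p = m.+1.
Local Notation w t := (hwt (coefvec (p *: G) t)).

Let s0_le_m : (s0 <= m)%N.
Proof. by rewrite -ltnS -size_p; apply: contraNT p_s0; rewrite -leqNgt => /(nth_default 0) ->. Qed.

Lemma hwt_slice_lb t : slice_poly p t != 0 ->
  (n <= w t + (minn (t - s0) delta - (t - m)))%N.
Proof.
move=> Q_neq0.
have Q_low r : (r < t - m)%N -> (slice_poly p t)`_r = 0.
  move=> lt_r; rewrite coef_poly; case: ifP => // _.
  by rewrite nth_default ?mul0rn // size_p; lia.
have Q_size : (size (slice_poly p t) <= (minn (t - s0) delta).+1)%N.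
  apply/leq_sizeP => r le_r; rewrite coef_poly; case: ltnP => // lt_r_t.
  case: leqP => [le_r_delta | _]; last by rewrite mulr0n.
  by rewrite p_below_s0 ?mul0rn //; lia.
by have := hwt_coefvec_lb Q_neq0 Q_low; lia.
Qed.

Lemma left_window_lb j : (j <= delta)%N -> (n <= w (s0 + j) + minn j (m - s0))%N.
Proof.
move=> le_j_delta; have := s0_le_m.
have Q_neq0 : slice_poly p (s0 + j) != 0.
  apply: contraNneq p_s0 => /polyP/(_ j).
  by rewrite /slice_poly coef_poly ltnS leq_addl le_j_delta addnK mulr1n coef0 => ->.
by have := hwt_slice_lb Q_neq0; lia.
Qed.

Lemma right_window_lb j : (j <= delta)%N ->
  (n <= w (m + j) + minn (m - s0) (delta - j))%N.
Proof.
move=> le_j_delta; have := s0_le_m.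
have p_m : p`_m != 0.
  by rewrite -[m]/(m.+1.-1) -size_p -lead_coefE lead_coef_eq0 -size_poly_gt0 size_p.
have Q_neq0 : slice_poly p (m + j) != 0.
  apply: contraNneq p_m => /polyP/(_ j).
  by rewrite /slice_poly coef_poly ltnS leq_addl le_j_delta addnK mulr1n coef0 => ->.
by have := hwt_slice_lb Q_neq0; lia.
Qed.

Lemma wt_scale_Gmat_lb : (n * delta.+1 <= wt (p *: G))%N.
Proof.
have le_s0_m := s0_le_m.
have max_size : (\max_(i < n) size ((p *: G) ord0 i) = s0 + ((m - s0) + delta.+1))%N.
  rewrite (eq_bigr (fun=> (s0 + ((m - s0) + delta.+1))%N)) ?bigmax_const_ord ?n_gt0 // => i _.
  rewrite mxE size_mul ?size_p ?size_Gmat_entry; first lia.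
    by rewrite -size_poly_eq0 size_p.
  by rewrite -size_poly_eq0 size_Gmat_entry.
rewrite /wt max_size big_split_ord /=; apply: leq_trans (leq_addl _ _).
apply: (window_sum_lb (f := fun j => w (s0 + j))) => // j le_j_delta; first exact: left_window_lb.
by rewrite addnA subnKC ?right_window_lb.
Qed.

End Codeword.

Lemma dist_Gmat : dist_eq (code G) (n * delta.+1).
Proof.
split.
  exists G; split; first by exists 1%:M; rewrite mul1mx.
  by split; [exact: Gmat_neq0 | exact: wt_Gmat].
move=> _ [u ->]; rewrite [u]mx11_scalar mul_scalar_mx => uG_neq0.
set p := u 0 0 in uG_neq0 *.
have p_neq0 : p != 0 by apply: contraNneq uG_neq0 => ->; rewrite scale0r.
have [|s0 p_s0 s0_min] := ex_minnP (P := fun k => p`_k != 0).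
  by exists (size p).-1; rewrite -lead_coefE lead_coef_eq0.
apply: (wt_scale_Gmat_lb p_s0 _ (esym (prednK _))); last by rewrite size_poly_gt0.
by move=> r lt_r_s0; apply/eqP; apply: contraTT lt_r_s0 => /s0_min; rewrite -leqNgt.
Qed.

End GeneratorMatrix.

Theorem theorem2p1 (F : finFieldType) (n delta : nat) (a : {unit F}) :
  (delta < n)%N -> (n <= #|F|.-1)%N -> (n <= #[a]%g)%N ->
  [/\ right_invertible (Gmat n delta (val a)),
      constraint_length1 (Gmat n delta (val a)) = delta
    & dist_eq (code (Gmat n delta (val a))) (n * delta.+1)%N].
Proof.
move=> lt_delta_n _ le_n_a.
have a_neq0 : val a != 0 by rewrite -unitfE (valP a).
have expr_inj := expr_unit_inj le_n_a.
by split; [exact: Gmat_right_invertible | exact: constraint_length_Gmat | exact: dist_Gmat].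
Qed.
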